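(* Let $\alpha>0$, $u=\mathbf{1}_{[-\alpha,\alpha]}$, $\sigma>0$ with $\sigma^2\le\alpha^2/24$, and $$\mathcal{C}(\mathbf{x}) = \Big\langle\nabla_{\mathbf{x}}[\varphi^{(2)}_{\sigma^2}\ast uu^*](\mathbf{x}),\ \begin{bmatrix}0&-1\\1&0\end{bmatrix}\mathbf{x}\Big\rangle_{\ell^2}.$$ Then $\mathcal{C}(s,t)\ge0$ for every $\mathbf{x}=(s,t)$ with $0\le t\le s$.
   Context: $uu^*(s,t)=u(s)u(t)$; $\varphi^{(2)}_{\sigma^2}(\mathbf{x}) = (2\pi\sigma^2)^{-1}e^{-\|\mathbf{x}\|_2^2/(2\sigma^2)}$ and $\ast$ is convolution on $\mathbb{R}^2$. *)

From HB Require Import structures.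
From mathcomp Require Import all_boot all_order all_algebra.
From mathcomp Require Import all_classical all_reals all_analysis.
Set Implicit Arguments. Unset Strict Implicit. Unset Printing Implicit Defensive.
Import Order.TTheory GRing.Theory Num.Theory.
Import numFieldNormedType.Exports.
Local Open Scope classical_set_scope.
Local Open Scope ring_scope.

Section Defs.
Variable R : realType.

Definition phi2 (sigma2 : R) (x : R * R) : R :=
  (2 * pi * sigma2)^-1 * expR (- (x.1 ^+ 2 + x.2 ^+ 2) / (2 * sigma2)).

Definition u_ind (alpha : R) : R -> R := \1_(`[- alpha, alpha]%classic).

Definition uustar (u : R -> R) (x : R * R) : R := u x.1 * u x.2.

Definition conv2 (f g : R * R -> R) (x : R * R) : R :=
  Rintegral ((@lebesgue_measure R) \x (@lebesgue_measure R))%E setT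
    (fun y : R * R => f (x.1 - y.1, x.2 - y.2) * g y).

Definition grad2 (F : R * R -> R) (x : R * R) : R * R :=
  (derive1 (fun s => F (s, x.2)) x.1, derive1 (fun t => F (x.1, t)) x.2).

Definition dot2 (v w : R * R) : R := v.1 * w.1 + v.2 * w.2.

Definition rotJ (x : R * R) : R * R := (- x.2, x.1).

Definition Ccal (alpha sigma : R) (x : R * R) : R :=
  dot2 (grad2 (conv2 (phi2 (sigma ^+ 2)) (uustar (u_ind alpha))) x) (rotJ x).

End Defs.

From HB Require Import structures.
From mathcomp Require Import all_boot all_order all_algebra.
From mathcomp Require Import all_classical all_reals all_analysis.
From mathcomp Require Import measurable_realfun ring lra.
Set Implicit Arguments. Unset Strict Implicit. Unset Printing Implicit Defensive.
Import Order.TTheory GRing.Theory Num.Theory.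
Import numFieldNormedType.Exports.
Local Open Scope ring_scope.

(* Write v = sigma^2 and g(w) = exp(-w^2/2v) (gauss).  The convolution factors as
   (2 pi v)^-1 G(s) G(t) with G(x) = int_{-alpha}^{alpha} g(x - y) dy (gauss_box),
   and G'(x) = g(x + alpha) - g(x - alpha) = -(x/v) A(x) with
   A(x) = int_{-alpha}^{alpha} g(x - y) w(y) dy (gauss_box_tilt) and
   w(y) = exp((y^2 - alpha^2)/2v) (tilt): g(x - y) w(y) is the exponential of an
   affine function of y, so A has a closed form.  Hence
   C(s,t) = (2 pi v)^-1 (s t / v) (A(s) G(t) - A(t) G(s)).  Folding y into -y with
   K_x(y) = g(x - y) + g(x + y) (gauss_fold), the last factor is a positive multiple
   of the double integral of (w(y) - w(z)) (K_s(y) K_t(z) - K_t(y) K_s(z)), which is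
   pointwise nonnegative: w increases with y^2, and K_s(y) K_t(z) and K_t(y) K_s(z)
   are, up to a common factor, sums of two values of cosh whose arguments differ
   in square by (s^2 - t^2)(y^2 - z^2)/v^2. *)

Section gaussian_kernel.
Variables (R : realType) (v : R).

Definition gauss (w : R) : R := expR (- (w ^+ 2) / (2 * v)).

Definition tilt (a y : R) : R := expR ((y ^+ 2 - a ^+ 2) / (2 * v)).

Definition gauss_fold (x y : R) : R := gauss (x - y) + gauss (x + y).

Lemma gauss_ge0 w : 0 <= gauss w. Proof. exact: expR_ge0. Qed.

Lemma tilt_ge0 a y : 0 <= tilt a y. Proof. exact: expR_ge0. Qed.

Lemma gauss_fold_ge0 x y : 0 <= gauss_fold x y.
Proof. by rewrite addr_ge0 ?gauss_ge0. Qed.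

Lemma gaussN w : gauss (- w) = gauss w.
Proof. by rewrite /gauss sqrrN. Qed.

Lemma tiltN a y : tilt a (- y) = tilt a y.
Proof. by rewrite /tilt sqrrN. Qed.

Lemma tilt_edge a : tilt a a = 1.
Proof. by rewrite /tilt subrr mul0r expR0. Qed.

Lemma continuous_gauss : continuous gauss.
Proof.
move=> w; rewrite /gauss.
apply: (@continuous_comp _ _ _ (fun w : R => - (w ^+ 2) / (2 * v)) expR).
  apply: continuousM; last exact: cst_continuous.
  by apply: continuousN; exact: exprn_continuous.
exact: continuous_expR.
Qed.

Lemma continuous_gauss_sub x : continuous (fun y => gauss (x - y)).
Proof.
move=> y; apply: (@continuous_comp _ _ _ (fun y : R => x - y) gauss).
  by apply: continuousB; [exact: cst_continuous|exact: cvg_id].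
exact: continuous_gauss.
Qed.

Lemma continuous_gauss_fold x : continuous (gauss_fold x).
Proof.
move=> y.
apply: (@continuousD _ _ _ (fun y => gauss (x - y)) (fun y => gauss (x + y))).
  exact: continuous_gauss_sub.
apply: (@continuous_comp _ _ _ (fun y : R => x + y) gauss).
  by apply: continuousD; [exact: cst_continuous|exact: cvg_id].
exact: continuous_gauss.
Qed.

Lemma continuous_tilt a : continuous (tilt a).
Proof.
move=> y; rewrite /tilt.
apply: (@continuous_comp _ _ _ (fun y : R => (y ^+ 2 - a ^+ 2) / (2 * v)) expR).
  apply: continuousM; last exact: cst_continuous.
  by apply: continuousB; [exact: exprn_continuous|exact: cst_continuous].
exact: continuous_expR.
Qed.

Lemma phi2_gauss x : phi2 v x = (2 * pi * v)^-1 * gauss x.1 * gauss x.2.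
Proof. by rewrite /phi2 /gauss -[RHS]mulrA -expRD -mulrDl -opprD. Qed.

Lemma expR_sym_le (a b : R) :
  b ^+ 2 <= a ^+ 2 -> expR b + expR (- b) <= expR a + expR (- a).
Proof.
have sym (c : R) : expR c + expR (- c) = expR `|c| + expR (- `|c|).
  by case: (ler0P c) => c0; rewrite ?ger0_norm ?ltr0_norm ?opprK // addrC.
move=> ba; rewrite (sym a) (sym b).
have : `|b| <= `|a| by rewrite -ler_sqr ?nnegrE // !real_normK ?num_real.
move: (normr_ge0 a) (normr_ge0 b); move: `|a| `|b| => p q p0 q0 qp.
have expN_diff : expR (- q) - expR (- p) = expR (- (p + q)) * (expR p - expR q).
  by rewrite mulrBr -!expRD; congr (expR _ - expR _); ring.
have : 0 <= (expR p - expR q) * (1 - expR (- (p + q))).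
  by rewrite mulr_ge0 // subr_ge0 ?ler_expR // -expR0 ler_expR; lra.
rewrite mulrBr mulr1 mulrC -expN_diff; lra.
Qed.

Hypothesis v_gt0 : 0 < v.
Let v_neq0 : v != 0. Proof. exact: lt0r_neq0. Qed.

Lemma gauss_tilt a x y :
  gauss (x - y) * tilt a y = expR (- (x ^+ 2 + a ^+ 2) / (2 * v) + x * y / v).
Proof. by rewrite /gauss /tilt -expRD; congr expR; field. Qed.

Lemma gauss_fold_mul s t y z : gauss_fold s y * gauss_fold t z =
  expR (- (s ^+ 2 + t ^+ 2 + y ^+ 2 + z ^+ 2) / (2 * v)) *
  (expR ((s * y + t * z) / v) + expR (- ((s * y + t * z) / v)) +
   (expR ((s * y - t * z) / v) + expR (- ((s * y - t * z) / v)))).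
Proof.
rewrite /gauss_fold /gauss mulrDl !mulrDr -!expRD [RHS]addrACA [X in _ = _ + X]addrC.
by congr (expR _ + expR _ + (expR _ + expR _)); field.
Qed.

Lemma gauss_fold_tp2 s t y z : 0 <= t <= s -> z ^+ 2 <= y ^+ 2 ->
  gauss_fold t y * gauss_fold s z <= gauss_fold s y * gauss_fold t z.
Proof.
move=> /andP[t0 ts] zy.
have sq_le p q : p ^+ 2 - q ^+ 2 = (s ^+ 2 - t ^+ 2) * (y ^+ 2 - z ^+ 2) / v ^+ 2 ->
    q ^+ 2 <= p ^+ 2.
  move=> e; rewrite -subr_ge0 e divr_ge0 ?sqr_ge0 // mulr_ge0 // subr_ge0 //.
  by rewrite ler_sqr ?nnegrE //; lra.
rewrite !gauss_fold_mul [t ^+ 2 + s ^+ 2]addrC ler_wpM2l ?expR_ge0 //.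
by rewrite lerD // expR_sym_le // sq_le //; field.
Qed.

Lemma tilt_le a y z : z ^+ 2 <= y ^+ 2 -> tilt a z <= tilt a y.
Proof.
by move=> zy; rewrite ler_expR ler_pM2r ?invr_gt0 ?mulr_gt0 // lerD2r.
Qed.

Lemma tilt_gauss_fold_ge0 a s t y z : 0 <= t <= s ->
  0 <= (tilt a y - tilt a z) *
       (gauss_fold s y * gauss_fold t z - gauss_fold t y * gauss_fold s z).
Proof.
move=> ts; have [zy|/ltW yz] := lerP (z ^+ 2) (y ^+ 2).
  by rewrite mulr_ge0 // subr_ge0 ?tilt_le ?gauss_fold_tp2.
rewrite -mulrNN mulr_ge0 // opprB subr_ge0 ?tilt_le //.
by rewrite [gauss_fold s y * _]mulrC [gauss_fold t y * _]mulrC gauss_fold_tp2.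
Qed.

End gaussian_kernel.

Section separable_tonelli.
Context d1 d2 (T1 : measurableType d1) (T2 : measurableType d2) (R : realType).
Variables (m1 : {sigma_finite_measure set T1 -> \bar R})
          (m2 : {sigma_finite_measure set T2 -> \bar R}).

Lemma measurable_fun_prod_mul (f : T1 -> R) (h : T2 -> R) :
  measurable_fun setT f -> measurable_fun setT h ->
  measurable_fun setT (fun z : T1 * T2 => f z.1 * h z.2).
Proof.
move=> mf mh; apply: measurable_funM.
- exact: measurableT_comp mf measurable_fst.
- exact: measurableT_comp mh measurable_snd.
Qed.

Lemma ge0_integral_prod_mul (f : T1 -> R) (h : T2 -> R) :
  measurable_fun setT f -> measurable_fun setT h ->
  (forall x, 0 <= f x) -> (forall y, 0 <= h y) ->
  (\int[m1 \x m2]_z (f z.1 * h z.2)%:E =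
   \int[m1]_x (f x)%:E * \int[m2]_y (h y)%:E)%E.
Proof.
move=> mf mh f0 h0.
rewrite fubini_tonelli1 /fubini_F /=; last 2 first.
- by apply/measurable_EFinP; exact: measurable_fun_prod_mul.
- by move=> z; rewrite lee_fin mulr_ge0.
under eq_integral => x _.
  under eq_integral do rewrite EFinM.
  rewrite ge0_integralZl_EFin //.
  over.
- by move=> y _; rewrite lee_fin.
- exact/measurable_EFinP.
rewrite /= ge0_integralZr //.
- exact/measurable_EFinP.
- by move=> x _; rewrite lee_fin.
- by apply: integral_ge0 => y _; rewrite lee_fin.
Qed.

End separable_tonelli.

Section interval_integral.
Context {R : realType}.
Notation mu := (@lebesgue_measure R).
Implicit Types (a b c x : R) (f : R -> R).

Lemma integrable_itv_continuous a b f :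
  continuous f -> mu.-integrable `[a, b] (EFin \o f).
Proof.
move=> cf; apply: continuous_compact_integrable; first exact: segment_compact.
exact: continuous_subspaceT.
Qed.

Lemma measurable_fun_mul_indic_itv a b f : continuous f ->
  measurable_fun setT (fun y => f y * \1_(`[a, b]%classic) y).
Proof.
move=> cf; apply: measurable_funM; first exact: continuous_measurable_fun.
by apply: measurable_indic; exact: measurable_itv.
Qed.

Lemma integral_mul_indic_itv a b f : continuous f ->
  (\int[mu]_y (f y * \1_(`[a, b]%classic) y)%:E =
   (\int[mu]_(y in `[a, b]) f y)%:E)%E.
Proof.
move=> cf; rewrite fineK; last exact/integrable_fin_num/integrable_itv_continuous.
rewrite integral_mkcond; apply: eq_integral => y _.
by rewrite /patch indicE; case: ifPn => _; rewrite ?mulr1 ?mulr0.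
Qed.

Lemma Rintegral_itvN a f : 0 <= a -> continuous f ->
  \int[mu]_(y in `[- a, a]) f (- y) = \int[mu]_(y in `[- a, a]) f y.
Proof.
move=> a0 cf; have Na_le_a : - a <= a by lra.
have := @integration_by_substitution_oppr R f (- a) a Na_le_a.
by rewrite opprK /Rintegral => -> //; exact: continuous_subspaceT.
Qed.

Lemma Rintegral_itv_symmetrize a f : 0 <= a -> continuous f ->
  \int[mu]_(y in `[- a, a]) (f y + f (- y)) = 2 * \int[mu]_(y in `[- a, a]) f y.
Proof.
move=> a0 cf.
have cfN : continuous (fun y => f (- y)).
  by move=> y; apply: (@continuous_comp _ _ _ -%R f); [exact: opp_continuous|exact: cf].
rewrite RintegralD; [|exact: measurable_itv|exact: integrable_itv_continuous..].
by rewrite Rintegral_itvN // mulr_natl mulr2n.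
Qed.

Lemma Rintegral_itv_shift a b x f : a <= b -> continuous f ->
  \int[mu]_(y in `[a, b]) f (y + x) = \int[mu]_(y in `[a + x, b + x]) f y.
Proof.
move=> ab cf.
have shift' : (shift x)^`()%classic = cst 1.
  by apply/funext => z; have h := @is_derive_shift R z 1 x; rewrite derive1E derive_val.
have cshift : continuous (shift x).
  by move=> y; apply: continuousD; [exact: cvg_id|exact: cst_continuous].
transitivity (\int[mu]_(y in `[a, b]) ((f \o shift x) * (shift x)^`()%classic) y).
  by apply: eq_Rintegral => y _; rewrite shift' /= mulr1.
rewrite /Rintegral -integration_by_substitution_increasing //.
- by move=> y z _ _ yz; rewrite /shift ltrD2r.
- by move=> y _; rewrite shift'; exact: cst_continuous.
- by rewrite shift'; exact: is_cvg_cst.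
- by rewrite shift'; exact: is_cvg_cst.
- split.
  + by move=> y _; have h := @is_derive_shift R y 1 x; exact: ex_derive.
  + by apply: cvg_at_right_filter; exact: cshift.
  + by apply: cvg_at_left_filter; exact: cshift.
- exact: continuous_subspaceT.
Qed.

Lemma Rintegral_itv_split c a b f : c <= a -> a <= b -> continuous f ->
  \int[mu]_(y in `[a, b]) f y =
  \int[mu]_(y in `[c, b]) f y - \int[mu]_(y in `[c, a]) f y.
Proof.
move=> ca ab cf; rewrite (@Rintegral_itvB R f (BLeft c) (BRight b) a).
- rewrite Rintegral_itv_obnd_cbnd //.
  apply: integrableS (integrable_itv_continuous a b cf) => //.
  by move=> y /=; rewrite !in_itv /= => /andP[/ltW -> ->].
- exact: integrable_itv_continuous.
- by rewrite bnd_simp.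
- by rewrite bnd_simp.
Qed.

Lemma is_derive_Rintegral_itv c z f : c < z -> continuous f ->
  is_derive z 1 (fun w => \int[mu]_(y in `[c, w]) f y) (f z).
Proof.
move=> cz cf; have zz1 : z < z + 1 by rewrite ltrDl.
have [df <-] :=
  continuous_FTC1_closed zz1 (integrable_itv_continuous c (z + 1) cf) cz (cf z).
by rewrite derive1E; exact: derivableP.
Qed.

Lemma is_derive_Rintegral_itv_centered a x f : 0 <= a -> continuous f ->
  is_derive x 1 (fun w => \int[mu]_(y in `[w - a, w + a]) f y) (f (x + a) - f (x - a)).
Proof.
move=> a0 cf; set c := x - a - 1.
pose P w := \int[mu]_(y in `[c, w]) f y.
have dP b : c < x + b -> is_derive x 1 (P \o shift b) (f (x + b)).
  move=> cb; rewrite -[f (x + b)]mulr1.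
  by apply: is_derive1_comp; [exact: is_derive_Rintegral_itv|exact: is_derive_shift].
have ca : c < x + a by rewrite /c; lra.
have cNa : c < x + - a by rewrite /c; lra.
have dH := is_deriveB (dP a ca) (dP (- a) cNa).
apply: near_eq_is_derive dH; near=> w.
have xw : x - 1 < w by near: w; apply: lt_nbhsr; rewrite ltrBlDr ltrDl.
by rewrite (@Rintegral_itv_split c) // /c; lra.
Unshelve. all: by end_near.
Qed.

End interval_integral.

Section interval_double_integral.
Context {R : realType}.
Notation mu := (@lebesgue_measure R).
Variables a b : R.
Local Notation "f ^I" := (fun y => f y * \1_(`[a, b]%classic) y)
  (at level 2, format "f ^I").

Let indic_ge0 (f : R -> R) : (forall y, 0 <= f y) -> forall y : R, 0 <= f^I y.
Proof. by move=> f0 y; rewrite mulr_ge0 // indicE ler0n. Qed.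

Lemma measurable_fun_prod_indic_itv (f h : R -> R) : continuous f -> continuous h ->
  measurable_fun setT (fun z : R * R => f^I z.1 * h^I z.2).
Proof.
move=> cf ch; exact: measurable_fun_prod_mul
  (measurable_fun_mul_indic_itv a b cf) (measurable_fun_mul_indic_itv a b ch).
Qed.

Lemma integral_prod_indic_itv (f h : R -> R) : continuous f -> continuous h ->
  (forall y, 0 <= f y) -> (forall y, 0 <= h y) ->
  (\int[(mu \x mu)%E]_z (f^I z.1 * h^I z.2)%:E =
   ((\int[mu]_(y in `[a, b]) f y) * \int[mu]_(y in `[a, b]) h y)%:E)%E.
Proof.
move=> cf ch f0 h0.
rewrite (ge0_integral_prod_mul mu mu (f := f^I) (h := h^I)).
- by rewrite !integral_mul_indic_itv.
- exact: measurable_fun_mul_indic_itv.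
- exact: measurable_fun_mul_indic_itv.
- exact: indic_ge0.
- exact: indic_ge0.
Qed.

Lemma Rintegral_itv_mul_le (f g f' g' : R -> R) :
  continuous f -> continuous g -> continuous f' -> continuous g' ->
  (forall y, 0 <= f y) -> (forall y, 0 <= g y) ->
  (forall y, 0 <= f' y) -> (forall y, 0 <= g' y) ->
  (forall y z, f y * g z + g y * f z <= f' y * g' z + g' y * f' z) ->
  (\int[mu]_(y in `[a, b]) f y) * (\int[mu]_(y in `[a, b]) g y) <=
  (\int[mu]_(y in `[a, b]) f' y) * (\int[mu]_(y in `[a, b]) g' y).
Proof.
have sym (p q : R -> R) : continuous p -> continuous q ->
    (forall y, 0 <= p y) -> (forall y, 0 <= q y) ->
    (\int[(mu \x mu)%E]_z (p^I z.1 * q^I z.2 + q^I z.1 * p^I z.2)%:E =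
     (2 * ((\int[mu]_(y in `[a, b]) p y) * \int[mu]_(y in `[a, b]) q y))%:E)%E.
  move=> cp cq p0 q0; under eq_integral do rewrite EFinD.
  rewrite ge0_integralD //; first last.
  - by apply/measurable_EFinP; exact: measurable_fun_prod_indic_itv.
  - by move=> z _; rewrite lee_fin mulr_ge0 ?indic_ge0.
  - by apply/measurable_EFinP; exact: measurable_fun_prod_indic_itv.
  - by move=> z _; rewrite lee_fin mulr_ge0 ?indic_ge0.
  by rewrite !integral_prod_indic_itv // -EFinD; congr EFin; ring.
move=> cf cg cf' cg' f0 g0 f'0 g'0 fg_le.
rewrite -(@ler_pM2l _ 2) // -lee_fin -!sym //.
apply: ge0_le_integral => //.
- by move=> z _; rewrite lee_fin addr_ge0 // mulr_ge0 ?indic_ge0.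
- by apply/measurable_EFinP/measurable_funD; exact: measurable_fun_prod_indic_itv.
- by apply/measurable_EFinP/measurable_funD; exact: measurable_fun_prod_indic_itv.
move=> [y z] _; rewrite lee_fin /=.
have factor (u w p q : R) : u * \1_(`[a, b]%classic) y * (w * \1_(`[a, b]%classic) z) +
    p * \1_(`[a, b]%classic) y * (q * \1_(`[a, b]%classic) z) =
    (u * w + p * q) * (\1_(`[a, b]%classic) y * \1_(`[a, b]%classic) z).
  by ring.
by rewrite !factor ler_wpM2r // mulr_ge0 // indicE ler0n.
Qed.

End interval_double_integral.

Section gauss_box.
Variables (R : realType) (v a : R).
Hypotheses (v_gt0 : 0 < v) (a_gt0 : 0 < a).
Notation mu := (@lebesgue_measure R).
Let v_neq0 : v != 0. Proof. exact: lt0r_neq0. Qed.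
Let a_ge0 : 0 <= a. Proof. exact: ltW. Qed.

Definition gauss_box (x : R) : R := \int[mu]_(y in `[- a, a]) gauss v (x - y).

Definition gauss_box_tilt (x : R) : R :=
  \int[mu]_(y in `[- a, a]) (gauss v (x - y) * tilt v a y).

Lemma conv2_phi2_uustar x : conv2 (phi2 v) (uustar (u_ind a)) x =
  (2 * pi * v)^-1 * gauss_box x.1 * gauss_box x.2.
Proof.
case: x => x1 x2; set k := (2 * pi * v)^-1.
have k_ge0 : 0 <= k by rewrite invr_ge0 ltW // !mulr_gt0 // pi_gt0.
have e (z : R * R) : phi2 v (x1 - z.1, x2 - z.2) * uustar (u_ind a) z =
    k * (gauss v (x1 - z.1) * \1_(`[- a, a]%classic) z.1 *
        (gauss v (x2 - z.2) * \1_(`[- a, a]%classic) z.2)).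
  by rewrite phi2_gauss /uustar /u_ind /k /=; ring.
rewrite /conv2 /Rintegral; under eq_integral do rewrite e EFinM.
have cg1 : continuous (fun y => gauss v (x1 - y)) by exact: continuous_gauss_sub.
have cg2 : continuous (fun y => gauss v (x2 - y)) by exact: continuous_gauss_sub.
rewrite ge0_integralZl_EFin //; first last.
- by apply/measurable_EFinP; exact: (measurable_fun_prod_indic_itv _ _ cg1 cg2).
- by move=> z _; rewrite lee_fin !mulr_ge0 ?gauss_ge0 // indicE ler0n.
by rewrite (integral_prod_indic_itv _ _ cg1 cg2) /= ?mulrA // => y; exact: gauss_ge0.
Qed.

Lemma gauss_box_itv x : gauss_box x = \int[mu]_(y in `[x - a, x + a]) gauss v y.
Proof.
rewrite /gauss_box -(Rintegral_itvN a_ge0 (@continuous_gauss_sub _ v x)).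
under eq_Rintegral do rewrite opprK addrC.
rewrite Rintegral_itv_shift ?[- a + x]addrC ?[a + x]addrC //.
  by have := a_ge0; lra.
exact: continuous_gauss.
Qed.

Lemma gauss_box_tiltE x : x != 0 ->
  gauss_box_tilt x = v / x * (gauss v (x - a) - gauss v (x + a)).
Proof.
move=> x0; set C := - (x ^+ 2 + a ^+ 2) / (2 * v).
pose F y := v / x * expR (C + x * y / v).
have dF (y : R) : is_derive y 1 F (expR (C + x * y / v)).
  by apply: is_derive_eq; rewrite add0r mul1r /GRing.scale /=; field; rewrite v_neq0 x0.
have cF : continuous F.
  move=> y; have dFy := dF y.
  by apply/differentiable_continuous/derivable1_diffP; exact: ex_derive.
rewrite /gauss_box_tilt /Rintegral (@continuous_FTC2 _ _ F); last 4 first.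
- by rewrite gtrN.
- apply: continuous_subspaceT => y.
  apply: (continuousM (s := fun y => gauss v (x - y)) (t := tilt v a)).
  + exact: continuous_gauss_sub.
  + exact: continuous_tilt.
- split.
  + by move=> y _; have dFy := dF y; exact: ex_derive.
  + by apply: cvg_at_right_filter; exact: cF.
  + by apply: cvg_at_left_filter; exact: cF.
- by move=> y _; have dFy := dF y; rewrite derive1E derive_val gauss_tilt.
rewrite -EFinB /= /F -!gauss_tilt //.
by rewrite tiltN tilt_edge !mulr1 opprK mulrBr.
Qed.

Lemma gauss_edge_diff x :
  gauss v (x + a) - gauss v (x - a) = - (x / v) * gauss_box_tilt x.
Proof.
have [->|x0] := eqVneq x 0; first by rewrite add0r sub0r gaussN subrr mul0r oppr0 mul0r.
by rewrite gauss_box_tiltE //; field; rewrite x0 v_neq0.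
Qed.

Lemma is_derive_gauss_box (x : R) :
  is_derive x 1 gauss_box (- (x / v) * gauss_box_tilt x).
Proof.
have -> : gauss_box = fun w => \int[mu]_(y in `[w - a, w + a]) gauss v y.
  by apply/funext => w; exact: gauss_box_itv.
rewrite -gauss_edge_diff.
exact: is_derive_Rintegral_itv_centered (@continuous_gauss _ v).
Qed.

Lemma gauss_box_tilt_le s t : 0 <= t <= s ->
  gauss_box_tilt t * gauss_box s <= gauss_box_tilt s * gauss_box t.
Proof.
move=> ts.
have cK x : continuous (gauss_fold v x) by exact: continuous_gauss_fold.
have cKw x : continuous (fun y => gauss_fold v x y * tilt v a y).
  move=> y; apply: (continuousM (s := gauss_fold v x) (t := tilt v a)).
  + exact: cK.
  + exact: continuous_tilt.
have Kw_ge0 x y : 0 <= gauss_fold v x y * tilt v a y.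
  by rewrite mulr_ge0 ?gauss_fold_ge0 ?tilt_ge0.
have foldK x : \int[mu]_(y in `[- a, a]) gauss_fold v x y = 2 * gauss_box x.
  rewrite -Rintegral_itv_symmetrize //; last exact: continuous_gauss_sub.
  by apply: eq_Rintegral => y _; rewrite /gauss_fold opprK.
have foldKw x : \int[mu]_(y in `[- a, a]) (gauss_fold v x y * tilt v a y) =
    2 * gauss_box_tilt x.
  rewrite -Rintegral_itv_symmetrize //; last first.
    move=> y; apply: (continuousM (s := fun y => gauss v (x - y)) (t := tilt v a)).
    + exact: continuous_gauss_sub.
    + exact: continuous_tilt.
  by apply: eq_Rintegral => y _; rewrite /gauss_fold opprK tiltN mulrDl.
rewrite -(@ler_pM2l _ (2 * 2)) // mulrACA [X in _ <= X]mulrACA -!foldK -!foldKw.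
apply: (Rintegral_itv_mul_le _ _ (cKw t) (cK s) (cKw s) (cK t) (Kw_ge0 t)
  (@gauss_fold_ge0 _ v s) (Kw_ge0 s) (@gauss_fold_ge0 _ v t)) => y z.
rewrite -subr_ge0; have := tilt_gauss_fold_ge0 v_gt0 a y z ts.
by congr (0 <= _); ring.
Qed.

End gauss_box.

Lemma CcalE (R : realType) (alpha sigma s t : R) : 0 < alpha -> 0 < sigma ->
  Ccal alpha sigma (s, t) = (2 * pi * sigma ^+ 2)^-1 * (s * t / sigma ^+ 2) *
    (gauss_box_tilt (sigma ^+ 2) alpha s * gauss_box (sigma ^+ 2) alpha t -
     gauss_box_tilt (sigma ^+ 2) alpha t * gauss_box (sigma ^+ 2) alpha s).
Proof.
move=> a0 s0; rewrite /Ccal /dot2 /grad2 /rotJ /=.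
set v := sigma ^+ 2; have v0 : 0 < v by rewrite exprn_gt0.
set k := (2 * pi * v)^-1; set G := gauss_box v alpha.
have convE x y : conv2 (phi2 v) (uustar (u_ind alpha)) (x, y) = G x * G y * k.
  by rewrite conv2_phi2_uustar //= /k /G; ring.
have -> : (fun x => conv2 (phi2 v) (uustar (u_ind alpha)) (x, t)) =
    fun x => G x * (G t * k) by apply/funext => x; rewrite convE mulrA.
have -> : (fun y => conv2 (phi2 v) (uustar (u_ind alpha)) (s, y)) =
    fun y => G y * (G s * k) by apply/funext => y; rewrite convE mulrA [G s * _]mulrC.
have [dGs dGt] := (is_derive_gauss_box v0 a0 s, is_derive_gauss_box v0 a0 t).
rewrite !derive1Mr; try exact: ex_derive.
by rewrite !derive1E !derive_val /k; ring.
Qed.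

Theorem mainTheorem12 (R : realType) (alpha sigma : R) :
  0 < alpha -> 0 < sigma -> sigma ^+ 2 <= alpha ^+ 2 / 24 ->
  forall s t : R, 0 <= t -> t <= s -> 0 <= Ccal alpha sigma (s, t).
Proof.
move=> a0 s0 _ s t t0 ts; have v0 : 0 < sigma ^+ 2 by rewrite exprn_gt0.
rewrite CcalE // !mulr_ge0 //; last 4 first.
- by rewrite invr_ge0 ltW // !mulr_gt0 // pi_gt0.
- exact: le_trans ts.
- by rewrite invr_ge0 ltW.
- by rewrite subr_ge0 gauss_box_tilt_le // t0 ts.
Qed.
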